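(* Let $(X,\sigma_X)$, $(Y,\sigma_Y)$ be one-sided subshifts, $\pi:X\to Y$ a one-block factor map, $X$ with the specification property, and $\mathcal F=\{\log f_n\}$ an almost additive potential on $X$ with bounded variation. For $i_1\cdots i_n\in B_n(Y)$ let $a_{i_1\cdots i_n}=\tilde g_n(y)$ for $y\in[i_1\cdots i_n]$ (well defined since $\tilde g_n$ depends only on $y_1,\dots,y_n$), and $S_n=\sum_{i_1\cdots i_n\in B_n(Y)}a_{i_1\cdots i_n}$. Then there exist $K_1,K_2>0$ such that $K_1\le e^{nP_Y(\tilde{\mathcal G})}/S_n\le K_2$ for all $n\in\mathbb N$.
   Context: Subshifts: one-sided closed shift-invariant subsets of $\{1,\dots,k\}^{\mathbb N}$; $B_n(Y)$ allowed words of length $n$. Specification: $\exists p>0$ such that for all allowable $u,v$ there is $w$ of length $p$ with $uwv$ allowable. Factor map: continuous surjection commuting with shifts, one-block. Almost additive: $\exists C>0$, $e^{-C}f_n(x)f_m(\sigma^nx)\le f_{n+m}(x)\le e^Cf_n(x)f_m(\sigma^nx)$; bounded variation: $\sup_n\sup\{f_n(x)/f_n(x'):x_i=x'_i,1\le i\le n\}<\infty$. $E_n(y)$: any set with exactly one point from each cylinder $[x_1\cdots x_n]$ of $X$ with $\pi([x_1\cdots x_n])\subseteq[y_1\cdots y_n]$; $g_n(y)=\sup_{E_n(y)}\sum_{x\in E_n(y)}f_n(x)$; $\tilde g_n=g_ne^{-nP_X(\mathcal F)}$; $\tilde{\mathcal G}=\{\log\tilde g_n\}$; $P_Y(\tilde{\mathcal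 G})=\lim_{\epsilon\to0}\limsup_n\frac1n\log\sup_E\sum_{y\in E}\tilde g_n(y)$ over $(n,\epsilon)$-separated sets. *)

From Stdlib Require Import Reals Lra Lia List Classical ClassicalEpsilon.
Import ListNotations.
Open Scope R_scope.

(* Points of the full shift: sequences x : nat -> nat, with x 0 playing the
   role of the paper's x_1.  Letters are 1..k. *)
Definition pt := nat -> nat.

Definition shift (x : pt) : pt := fun i => x (S i).
Definition shiftn (n : nat) (x : pt) : pt := Nat.iter n shift x.

Definition prefix (n : nat) (x : pt) : list nat := map x (seq 0 n).

Fixpoint words (k n : nat) : list (list nat) :=
  match n with
  | O => [ [] ]
  | S m => flat_map (fun a => map (cons a) (words k m)) (seq 1 k)
  end.

Definition Subshift (k : nat) (X : pt -> Prop) : Prop :=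
  (exists x, X x) /\
  (forall x, X x -> forall i, (1 <= x i <= k)%nat) /\
  (forall x, X x -> X (shift x)) /\
  (forall x, (forall n, exists z, X z /\ prefix n z = prefix n x) -> X x).

Definition Allowed (X : pt -> Prop) (u : list nat) : Prop :=
  exists x, X x /\ prefix (length u) x = u.

Definition Specification (X : pt -> Prop) : Prop :=
  exists p : nat, (0 < p)%nat /\
    forall u v, Allowed X u -> Allowed X v ->
      exists w, length w = p /\ Allowed X (u ++ w ++ v).

Definition blockmap (Phi : nat -> nat) (x : pt) : pt := fun i => Phi (x i).

(* pi = blockmap Phi is a factor map X -> Y (continuity and commuting with
   the shift are automatic for one-block maps) *)
Definition OneBlockFactor (X Y : pt -> Prop) (Phi : nat -> nat) : Prop :=
  (forall x, X x -> Y (blockmap Phi x)) /\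
  (forall y, Y y -> exists x, X x /\ blockmap Phi x = y).

Definition Potential (X : pt -> Prop) (f : nat -> pt -> R) : Prop :=
  forall n x, X x ->
    0 < f n x /\
    (forall e, 0 < e -> exists N, forall x', X x' -> prefix N x' = prefix N x ->
        Rabs (f n x' - f n x) < e).

Definition AlmostAdditive (X : pt -> Prop) (f : nat -> pt -> R) : Prop :=
  exists C, 0 < C /\
    forall x, X x -> forall n m, (1 <= n)%nat -> (1 <= m)%nat ->
      exp (- C) * f n x * f m (shiftn n x) <= f (n + m)%nat x /\
      f (n + m)%nat x <= exp C * f n x * f m (shiftn n x).

Definition BoundedVariation (X : pt -> Prop) (f : nat -> pt -> R) : Prop :=
  exists M, forall n, (1 <= n)%nat -> forall x x', X x -> X x' ->
    prefix n x = prefix n x' -> f n x <= M * f n x'.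

(* supremum of a set of reals (used only for nonempty bounded sets) *)
Definition Rsup (S : R -> Prop) : R :=
  epsilon (inhabits 0) (fun l => is_lub S l).

(* metric d(x,y) = (1/2)^(first index where x,y differ), 0 if x = y *)
Definition dist (x y : pt) : R :=
  Rsup (fun r => r = 0 \/ exists i, x i <> y i /\ r = (/2) ^ i).

(* d_n(x,y) = max_{0<=i<n} d(sigma^i x, sigma^i y) > eps *)
Definition Separated (n : nat) (eps : R) (x y : pt) : Prop :=
  exists i, (i < n)%nat /\ eps < dist (shiftn i x) (shiftn i y).

Definition SepSet (X : pt -> Prop) (n : nat) (eps : R) (E : list pt) : Prop :=
  NoDup E /\ (forall x, In x E -> X x) /\
  (forall x y, In x E -> In y E -> x <> y -> Separated n eps x y).

Definition sumR {A : Type} (g : A -> R) (l : list A) : R :=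
  fold_right (fun a acc => g a + acc) 0 l.

Definition Zsum (X : pt -> Prop) (g : nat -> pt -> R) (n : nat) (eps : R) : R :=
  Rsup (fun s => exists E, SepSet X n eps E /\ s = sumR (g n) E).

Definition IsLimsup (u : nat -> R) (L : R) : Prop :=
  forall d, 0 < d ->
    (forall N, exists n, (N <= n)%nat /\ L - d < u n) /\
    (exists N, forall n, (N <= n)%nat -> u n < L + d).

(* P = lim_{eps -> 0} limsup_n (1/n) log Zsum X g n eps *)
Definition Pressure (X : pt -> Prop) (g : nat -> pt -> R) (P : R) : Prop :=
  forall d, 0 < d -> exists eta, 0 < eta /\
    forall eps, 0 < eps < eta ->
      exists L, IsLimsup (fun n => ln (Zsum X g n eps) / INR n) L /\
                Rabs (L - P) < d.

Definition ind (P : Prop) (r : R) : R :=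
  if excluded_middle_informative P then r else 0.

Definition Wset (X : pt -> Prop) (Phi : nat -> nat) (n : nat) (w : list nat)
  (u : list nat) : Prop :=
  Allowed X u /\ length u = n /\
  (forall x, X x -> prefix n x = u -> prefix n (blockmap Phi x) = w).

(* g_n(y), as a function of the word y_1...y_n: sup over E_n(y) (one point
   c u chosen in each such cylinder [u]) of sum_{x in E_n(y)} f_n(x). *)
Definition gword (k : nat) (X : pt -> Prop) (Phi : nat -> nat)
  (f : nat -> pt -> R) (n : nat) (w : list nat) : R :=
  Rsup (fun s => exists c : list nat -> pt,
    (forall u, Wset X Phi n w u -> X (c u) /\ prefix n (c u) = u) /\
    s = sumR (fun u => ind (Wset X Phi n w u) (f n (c u))) (words k n)).

Definition gtilde (k : nat) (X : pt -> Prop) (Phi : nat -> nat)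
  (f : nat -> pt -> R) (PX : R) (n : nat) (y : pt) : R :=
  gword k X Phi f n (prefix n y) * exp (- (INR n * PX)).

Definition Ssum (k l : nat) (X Y : pt -> Prop) (Phi : nat -> nat)
  (f : nat -> pt -> R) (PX : R) (n : nat) : R :=
  sumR (fun w => ind (Allowed Y w) (gword k X Phi f n w * exp (- (INR n * PX))))
       (words l n).

(* Lemma 3.8: the normalised fibre sums S_n stay within constant factors of
   e^{n P_Y(tilde G)}; in fact P_Y(tilde G) = 0 and S_n is bounded above and
   below by positive constants.

   For a subshift Z and a sequence of functions h, let cylsum Z h n be the sum
   of h_n over one chosen point in each allowed n-cylinder of Z.
   1. If h has bounded variation, the separated-set sums defining the pressure
      lie between cylsum and a constant multiple of it: one point per cylinder
      is separated, and separated points have distinct longer prefixes.  So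
      two-sided bounds lo e^{nP} <= cylsum <= hi e^{nP} give pressure P.
   2. For almost additive f of bounded variation on X, cylsum X f is
      submultiplicative up to a constant and, by specification,
      supermultiplicative up to a gap; Fekete's lemma on its logarithm gives
      P = P_X(F) with cylsum X f ≍ e^{nP}, hence also Pressure X f P by 1.
   3. Grouping the n-cylinders of X by their image under pi, S_n lies within a
      factor M of e^{-nP} cylsum X f, so lo <= S_n <= M hi.
   4. tilde g_n depends only on y_1 ... y_n, so S_n = cylsum Y tilde g, and 1
      applied with P = 0 yields P_Y(tilde G) = 0; take K1 = 1/(M hi), K2 = 1/lo. *)

From Stdlib Require Import Reals List.
From Stdlib Require Import Lra Lia Classical ClassicalEpsilon FunctionalExtensionality.
Import ListNotations.
Open Scope R_scope.

Lemma ind_T (P : Prop) r : P -> ind P r = r.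
Proof. intro H; unfold ind; destruct excluded_middle_informative; tauto. Qed.

Lemma ind_F (P : Prop) r : ~ P -> ind P r = 0.
Proof. intro H; unfold ind; destruct excluded_middle_informative; tauto. Qed.

Lemma ind_nonneg (P : Prop) r : (P -> 0 <= r) -> 0 <= ind P r.
Proof. intro H; unfold ind; destruct excluded_middle_informative; auto; lra. Qed.

Lemma sumR_app {A : Type} (g : A -> R) l1 l2 : sumR g (l1 ++ l2) = sumR g l1 + sumR g l2.
Proof. induction l1; simpl; [lra | rewrite IHl1; lra]. Qed.

Lemma sumR_ext_in {A : Type} (g h : A -> R) l :
  (forall a, In a l -> g a = h a) -> sumR g l = sumR h l.
Proof. induction l; simpl; intros H; auto. rewrite H, IHl; auto. Qed.

Lemma sumR_le_in {A : Type} (g h : A -> R) l :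
  (forall a, In a l -> g a <= h a) -> sumR g l <= sumR h l.
Proof.
  induction l as [|a l IH]; simpl; intros H; [lra|].
  assert (g a <= h a) by auto. assert (sumR g l <= sumR h l) by auto. lra.
Qed.

Lemma sumR_const {A : Type} c (l : list A) : sumR (fun _ => c) l = c * INR (length l).
Proof. induction l; simpl length; [simpl; lra|]. simpl sumR. rewrite IHl, S_INR. lra. Qed.

Lemma sumR_nonneg {A : Type} (g : A -> R) l : (forall a, In a l -> 0 <= g a) -> 0 <= sumR g l.
Proof.
  intro H. replace 0 with (sumR (fun _ => 0) l) by (rewrite sumR_const; lra).
  apply sumR_le_in; auto.
Qed.

Lemma sumR_plus {A : Type} (g h : A -> R) l : sumR (fun a => g a + h a) l = sumR g l + sumR h l.
Proof. induction l; simpl; lra. Qed.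

Lemma sumR_scal {A : Type} (g : A -> R) c l : sumR (fun a => c * g a) l = c * sumR g l.
Proof. induction l; simpl; [lra | rewrite IHl; lra]. Qed.

Lemma sumR_map {A B : Type} (g : B -> R) (p : A -> B) l : sumR g (map p l) = sumR (fun a => g (p a)) l.
Proof. induction l; simpl; auto. rewrite IHl; auto. Qed.

Lemma sumR_flat_map {A B : Type} (g : B -> R) (F : A -> list B) l :
  sumR g (flat_map F l) = sumR (fun a => sumR g (F a)) l.
Proof. induction l; simpl; auto. rewrite sumR_app, IHl; auto. Qed.

Lemma sumR_swap {A B : Type} (F : A -> B -> R) l1 l2 :
  sumR (fun a => sumR (fun b => F a b) l2) l1 = sumR (fun b => sumR (fun a => F a b) l1) l2.
Proof.
  induction l1; simpl.
  - rewrite sumR_const; lra.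
  - rewrite IHl1, <- sumR_plus. auto.
Qed.

Lemma sumR_prod {A B : Type} (g : A -> R) (h : B -> R) l1 l2 :
  sumR (fun a => sumR (fun b => g a * h b) l2) l1 = sumR g l1 * sumR h l2.
Proof. induction l1; simpl; [lra|]. rewrite sumR_scal, IHl1. lra. Qed.

Lemma sumR_mul_sums {A B : Type} c (g : A -> R) (h : B -> R) l1 l2 :
  c * sumR g l1 * sumR h l2 = sumR (fun a => sumR (fun b => c * g a * h b) l2) l1.
Proof. rewrite (sumR_prod (fun a => c * g a) h), sumR_scal. reflexivity. Qed.

Lemma sumR_ge_term {A : Type} (g : A -> R) l a :
  (forall b, In b l -> 0 <= g b) -> In a l -> g a <= sumR g l.
Proof.
  intros H Ha. destruct (in_split _ _ Ha) as [p [q ->]].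
  rewrite sumR_app. simpl.
  assert (0 <= sumR g p) by (apply sumR_nonneg; intros; apply H, in_or_app; auto).
  assert (0 <= sumR g q) by (apply sumR_nonneg; intros; apply H, in_or_app; simpl; auto).
  lra.
Qed.

Lemma sumR_middle {A : Type} (g : A -> R) p a q :
  sumR g (p ++ a :: q) = g a + sumR g (p ++ q).
Proof. rewrite !sumR_app; simpl; lra. Qed.

Lemma sumR_incl {A : Type} (g : A -> R) l1 l2 :
  NoDup l1 -> incl l1 l2 -> (forall b, In b l2 -> 0 <= g b) -> sumR g l1 <= sumR g l2.
Proof.
  revert l2; induction l1 as [|a l1 IH]; intros l2 Hn Hi Hg; simpl.
  - apply sumR_nonneg; auto.
  - inversion Hn; subst. assert (Ha : In a l2) by (apply Hi; simpl; auto).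
    destruct (in_split _ _ Ha) as [p [q ->]].
    rewrite sumR_middle. enough (sumR g l1 <= sumR g (p ++ q)) by lra.
    apply IH; auto.
    + intros b Hb. assert (Hb' : In b (p ++ a :: q)) by (apply Hi; simpl; auto).
      apply in_app_or in Hb'. apply in_or_app. destruct Hb' as [H|[H|H]]; auto. subst; tauto.
    + intros b Hb; apply Hg. apply in_app_or in Hb; apply in_or_app; simpl; tauto.
Qed.

Lemma sumR_ind_unique {A : Type} (Q : A -> Prop) c w0 (L : list A) :
  NoDup L -> (forall w, Q w -> w = w0) -> (Q w0 -> In w0 L) ->
  sumR (fun w => ind (Q w) c) L = ind (Q w0) c.
Proof.
  intros Hn Hu Hi. destruct (classic (Q w0)) as [Hq|Hq].
  - destruct (in_split _ _ (Hi Hq)) as [p [q ->]]. apply NoDup_remove_2 in Hn.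
    rewrite sumR_middle, (ind_T _ _ Hq), (sumR_ext_in _ (fun _ => 0)), sumR_const; [lra|].
    intros a Ha. apply ind_F. intro Hqa. apply Hu in Hqa; subst; tauto.
  - rewrite (ind_F _ _ Hq), (sumR_ext_in _ (fun _ => 0)), sumR_const; [lra|].
    intros a _. apply ind_F. intro Hqa. pose proof (Hu _ Hqa); subst; tauto.
Qed.


Lemma Rsup_lub (S : R -> Prop) :
  (exists x, S x) -> (exists B, forall x, S x -> x <= B) -> is_lub S (Rsup S).
Proof.
  intros [x Hx] [B HB]. unfold Rsup. apply epsilon_spec.
  destruct (completeness S) as [l Hl]; [exists B; intros y Hy; apply HB; auto | exists x; auto |].
  exists l; auto.
Qed.

Lemma shiftn_S x n : shiftn (S n) x = shiftn n (shift x).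
Proof.
  revert x; induction n; intros x; auto.
  change (shiftn (S (S n)) x) with (shift (shiftn (S n) x)). rewrite IHn. reflexivity.
Qed.

Lemma shiftn_val n x i : shiftn n x i = x (n + i)%nat.
Proof. revert x i; induction n; intros x i; auto. rewrite shiftn_S, IHn. reflexivity. Qed.

Lemma shiftn_add n m x : shiftn m (shiftn n x) = shiftn (n + m) x.
Proof. apply functional_extensionality; intro i. rewrite !shiftn_val. f_equal; lia. Qed.

Lemma prefix_S n x : prefix (S n) x = x 0%nat :: prefix n (shift x).
Proof. unfold prefix. simpl. f_equal. rewrite <- seq_shift, map_map. reflexivity. Qed.

Lemma prefix_length n x : length (prefix n x) = n.
Proof. unfold prefix; rewrite length_map, length_seq; auto. Qed.

Lemma prefix_app n m x : prefix (n + m) x = prefix n x ++ prefix m (shiftn n x).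
Proof.
  revert x; induction n; intros x; auto.
  simpl plus. rewrite !prefix_S, IHn, shiftn_S. reflexivity.
Qed.

Lemma prefix_nth n x i : (i < n)%nat -> nth i (prefix n x) 0%nat = x i.
Proof.
  intro H. unfold prefix.
  rewrite nth_indep with (d' := x 0%nat) by (rewrite length_map, length_seq; auto).
  rewrite map_nth, seq_nth; auto.
Qed.

Lemma prefix_eq_pt n x y : prefix n x = prefix n y -> forall i, (i < n)%nat -> x i = y i.
Proof. intros H i Hi. rewrite <- (prefix_nth n x i Hi), <- (prefix_nth n y i Hi), H; auto. Qed.

Lemma prefix_blockmap Phi n x : prefix n (blockmap Phi x) = map Phi (prefix n x).
Proof. unfold prefix, blockmap. rewrite map_map; auto. Qed.

Lemma app_inv_len {A : Type} (l1 l2 l3 l4 : list A) :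
  l1 ++ l2 = l3 ++ l4 -> length l1 = length l3 -> l1 = l3 /\ l2 = l4.
Proof.
  revert l3; induction l1; intros [|b l3] H Hl; simpl in *; try discriminate; auto.
  injection H; intros H1 ->. destruct (IHl1 l3 H1) as [-> ->]; auto.
Qed.

Lemma firstn_app_length {A : Type} (l1 l2 : list A) n : length l1 = n -> firstn n (l1 ++ l2) = l1.
Proof. intros <-. rewrite <- (Nat.add_0_r (length l1)), firstn_app_2, app_nil_r. reflexivity. Qed.

Lemma in_words a n u : In u (words a n) <-> length u = n /\ Forall (fun c => (1 <= c <= a)%nat) u.
Proof.
  revert u; induction n; intros u; simpl.
  - split; [intros [<-|[]]; auto | intros [H _]; destruct u; simpl in *; auto; discriminate].
  - rewrite in_flat_map. split.
    + intros [c [Hc Hu]]. apply in_map_iff in Hu. destruct Hu as [v [<- Hv]]. apply IHn in Hv.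
      apply in_seq in Hc. simpl. destruct Hv; split; auto. constructor; auto; lia.
    + intros [Hl HF]. destruct u as [|c v]; simpl in Hl; [discriminate|]. inversion HF; subst.
      exists c; split; [apply in_seq; lia|]. apply in_map, IHn; auto.
Qed.

Lemma words_length a n u : In u (words a n) -> length u = n.
Proof. intro H; apply in_words in H; tauto. Qed.

Lemma NoDup_words a n : NoDup (words a n).
Proof.
  induction n; simpl; [constructor; auto; constructor|].
  generalize (seq_NoDup a 1). generalize (seq 1 a).
  induction l; intros Hn; simpl; [constructor|]. inversion Hn; subst. apply NoDup_app; auto.
  - apply NoDup_map_NoDup_ForallPairs; auto. intros x y _ _ H; injection H; auto.
  - intros u Hu Hu'. apply in_map_iff in Hu. destruct Hu as [v [<- _]]. apply in_flat_map in Hu'.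
    destruct Hu' as [c [Hc Hc']]. apply in_map_iff in Hc'. destruct Hc' as [w [Hw _]].
    injection Hw; intros; subst; tauto.
Qed.

Lemma sumR_words_split a n m (g : list nat -> R) :
  sumR g (words a (n + m)) = sumR (fun u => sumR (fun v => g (u ++ v)) (words a m)) (words a n).
Proof.
  revert g; induction n; intros g; [simpl; rewrite Rplus_0_r; reflexivity|].
  change (words a (S n + m)) with (flat_map (fun c => map (cons c) (words a (n + m))) (seq 1 a)).
  change (words a (S n)) with (flat_map (fun c => map (cons c) (words a n)) (seq 1 a)).
  rewrite !sumR_flat_map. apply sumR_ext_in; intros c _. rewrite !sumR_map.
  apply (IHn (fun u => g (c :: u))).
Qed.

Lemma subshift_prefix_in_words k X n x : Subshift k X -> X x -> In (prefix n x) (words k n).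
Proof.
  intros [_ [HX _]] Hx. apply in_words. split; [apply prefix_length|].
  apply Forall_forall. intros c Hc. unfold prefix in Hc.
  apply in_map_iff in Hc. destruct Hc as [i [<- _]]. apply HX; auto.
Qed.

Lemma subshift_shiftn k X n x : Subshift k X -> X x -> X (shiftn n x).
Proof. intros [_ [_ [HSh _]]] Hx. induction n; auto. simpl. apply HSh; auto. Qed.

(* There are allowed words of every length, so the word list is nonempty. *)
Lemma words_count_pos k X j : Subshift k X -> 0 < INR (length (words k j)).
Proof.
  intros HS. destruct (proj1 HS) as [x0 Hx0].
  assert (Hin := subshift_prefix_in_words k X j x0 HS Hx0).
  destruct (words k j); [destruct Hin|]. simpl length. rewrite S_INR.
  pose proof (pos_INR (length l0)). lra.
Qed.

Lemma allowed_app X u v : Allowed X (u ++ v) -> Allowed X u.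
Proof.
  intros [x [Hx Hp]]. exists x; split; auto. rewrite length_app, prefix_app in Hp.
  apply app_inv_len in Hp; [tauto | apply prefix_length].
Qed.

Lemma allowed_infix k X u v : Subshift k X -> Allowed X (u ++ v) -> Allowed X v.
Proof.
  intros HS [x [Hx Hp]]. exists (shiftn (length u) x). split; [eapply subshift_shiftn; eauto|].
  rewrite length_app, prefix_app in Hp. apply app_inv_len in Hp; [tauto | apply prefix_length].
Qed.

Lemma allowed_in_words k X u : Subshift k X -> Allowed X u -> In u (words k (length u)).
Proof. intros HS [x [Hx Hp]]. rewrite <- Hp at 1. eapply subshift_prefix_in_words; eauto. Qed.

Lemma allowed_prefix X n x : X x -> Allowed X (prefix n x).
Proof. intros Hx; exists x; split; auto. rewrite prefix_length; auto. Qed.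

(* A chosen point of the cylinder [u] (meaningful when u is allowed). *)
Definition rep (X : pt -> Prop) (u : list nat) : pt :=
  epsilon (inhabits (fun _ => 0%nat)) (fun x => X x /\ prefix (length u) x = u).

Lemma rep_spec X u : Allowed X u -> X (rep X u) /\ prefix (length u) (rep X u) = u.
Proof. intro H. unfold rep. apply epsilon_spec. exact H. Qed.

Lemma rep_prefix X n x : X x -> X (rep X (prefix n x)) /\ prefix n (rep X (prefix n x)) = prefix n x.
Proof.
  intro Hx. destruct (rep_spec X (prefix n x)) as [H1 H2]; [apply allowed_prefix; auto|].
  rewrite prefix_length in H2; auto.
Qed.

Lemma rep_concat k X n m u1 u2 : Subshift k X -> length u1 = n -> length u2 = m ->
  Allowed X (u1 ++ u2) ->
  X (rep X (u1 ++ u2)) /\ prefix n (rep X (u1 ++ u2)) = u1 /\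
  prefix m (shiftn n (rep X (u1 ++ u2))) = u2 /\ X (shiftn n (rep X (u1 ++ u2))).
Proof.
  intros HS H1 H2 Ha. destruct (rep_spec X _ Ha) as [Hx Hp].
  rewrite length_app, H1, H2, prefix_app in Hp.
  apply app_inv_len in Hp; [|rewrite prefix_length; auto].
  destruct Hp; repeat split; auto. eapply subshift_shiftn; eauto.
Qed.

Lemma pow_le1 x n : 0 <= x <= 1 -> x ^ n <= 1.
Proof. intro H; induction n; simpl; [lra|]. assert (0 <= x ^ n) by (apply pow_le; lra). nra. Qed.

Lemma dist_lub x y : is_lub (fun r => r = 0 \/ exists i, x i <> y i /\ r = (/2) ^ i) (dist x y).
Proof.
  unfold dist. apply Rsup_lub; [exists 0; auto|].
  exists 1. intros r [->|[i [_ ->]]]; [lra | apply pow_le1; lra].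
Qed.

Lemma dist_ge1 x y : x 0%nat <> y 0%nat -> 1 <= dist x y.
Proof. intro H. apply (proj1 (dist_lub x y)). right. exists 0%nat; split; auto. Qed.

Lemma dist_le x y j : (forall t, (t < j)%nat -> x t = y t) -> dist x y <= (/2) ^ j.
Proof.
  intro H. apply (proj2 (dist_lub x y)). intros r [->|[i [Hi ->]]]; [apply pow_le; lra|].
  assert (j <= i)%nat by (destruct (Nat.lt_ge_cases i j); auto; exfalso; apply Hi, H; auto).
  replace i with (j + (i - j))%nat by lia. rewrite pow_add.
  assert (0 <= (/2)^j) by (apply pow_le; lra). assert ((/2)^(i-j) <= 1) by (apply pow_le1; lra).
  nra.
Qed.

Lemma small_pow eps : 0 < eps -> exists j, (/2) ^ j <= eps.
Proof.
  intro He. destruct (pow_lt_1_zero (/2)) with (y := eps) as [N HN]; auto.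
  - rewrite Rabs_right; lra.
  - exists N. specialize (HN N (le_n N)). rewrite Rabs_right in HN; [lra|].
    apply Rle_ge, pow_le; lra.
Qed.

Lemma separated_prefix_neq n eps j x y :
  (/2) ^ j <= eps -> Separated n eps x y -> prefix (n + j) x <> prefix (n + j) y.
Proof.
  intros Hj [i [Hi He]] Hp. assert (dist (shiftn i x) (shiftn i y) <= (/2)^j); [|lra].
  apply dist_le. intros t Ht. rewrite !shiftn_val. apply (prefix_eq_pt _ _ _ Hp). lia.
Qed.

Lemma prefix_neq_separated n eps x y : eps < 1 -> prefix n x <> prefix n y -> Separated n eps x y.
Proof.
  intros He Hn. destruct (classic (exists i, (i < n)%nat /\ x i <> y i)) as [[i [Hi Hxy]]|Hc].
  - exists i; split; auto. eapply Rlt_le_trans; [exact He|]. apply dist_ge1.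
    rewrite !shiftn_val, Nat.add_0_r; auto.
  - exfalso; apply Hn. unfold prefix. apply map_ext_in. intros i Hi. apply in_seq in Hi.
    apply NNPP; intro; apply Hc; exists i; split; auto; lia.
Qed.

(** Cylinder sums control the separated-set sums defining the pressure. *)

Definition cylsum (a : nat) (Z : pt -> Prop) (h : nat -> pt -> R) (n : nat) : R :=
  sumR (fun u => ind (Allowed Z u) (h n (rep Z u))) (words a n).

Definition reps (Z : pt -> Prop) (L : list (list nat)) : list pt :=
  flat_map (fun u => if excluded_middle_informative (Allowed Z u) then [rep Z u] else []) L.

Lemma in_reps Z L x : In x (reps Z L) -> exists u, In u L /\ Allowed Z u /\ x = rep Z u.
Proof.
  unfold reps. intro H. apply in_flat_map in H. destruct H as [u [Hu Hx]].
  destruct excluded_middle_informative as [Ha|]; simpl in Hx; [|tauto].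
  destruct Hx as [<-|[]]. eauto.
Qed.

Lemma NoDup_reps Z n L : NoDup L -> (forall u, In u L -> length u = n) -> NoDup (reps Z L).
Proof.
  induction L as [|a L IH]; intros Hn Hl; [constructor|]. inversion Hn; subst.
  unfold reps; simpl. fold (reps Z L).
  destruct excluded_middle_informative as [Ha|Ha]; simpl; [|apply IH; auto with datatypes].
  constructor; [|apply IH; auto with datatypes].
  intro Hin. apply in_reps in Hin. destruct Hin as [v [Hv [Hav Hx]]].
  destruct (rep_spec Z a Ha) as [_ Hr1]. destruct (rep_spec Z v Hav) as [_ Hr2].
  rewrite Hl in Hr1, Hr2 by auto with datatypes.
  rewrite Hx, Hr2 in Hr1. subst. contradiction.
Qed.

Section SeparatedSums.
Variables (a : nat) (Z : pt -> Prop) (h : nat -> pt -> R) (M : R) (n : nat).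
Hypothesis HS : Subshift a Z.
Hypothesis M_nonneg : 0 <= M.
Hypothesis h_nonneg : forall x, Z x -> 0 <= h n x.
Hypothesis h_bv : forall x, Z x -> h n x <= M * h n (rep Z (prefix n x)).

Lemma reps_separated eps : eps < 1 -> SepSet Z n eps (reps Z (words a n)).
Proof.
  intro He. split; [|split].
  - apply (NoDup_reps Z n); [apply NoDup_words | apply words_length].
  - intros x Hx. apply in_reps in Hx. destruct Hx as [u [_ [Hu ->]]]. apply rep_spec; auto.
  - intros x y Hx Hy Hxy. apply in_reps in Hx. apply in_reps in Hy.
    destruct Hx as [u [Hu [Hau ->]]]. destruct Hy as [v [Hv [Hav ->]]].
    apply prefix_neq_separated; auto.
    destruct (rep_spec Z u Hau) as [_ Hr1]. destruct (rep_spec Z v Hav) as [_ Hr2].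
    rewrite (words_length _ _ _ Hu) in Hr1. rewrite (words_length _ _ _ Hv) in Hr2.
    rewrite Hr1, Hr2. intros ->; tauto.
Qed.

Lemma sumR_reps : sumR (h n) (reps Z (words a n)) = cylsum a Z h n.
Proof.
  unfold reps, cylsum. rewrite sumR_flat_map. apply sumR_ext_in. intros u _. unfold ind.
  destruct excluded_middle_informative; simpl; lra.
Qed.

(* Summing h_n over the (n+j)-cylinders, by the chosen point of the n-cylinder
   they start with, counts each n-cylinder at most #(j-words) times. *)
Lemma extension_sum_le j :
  sumR (fun v => ind (Allowed Z v) (h n (rep Z (firstn n v)))) (words a (n + j))
  <= INR (length (words a j)) * cylsum a Z h n.
Proof.
  rewrite sumR_words_split. unfold cylsum. rewrite <- sumR_scal. apply sumR_le_in. intros u Hu.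
  rewrite Rmult_comm, <- sumR_const. apply sumR_le_in. intros v _.
  rewrite firstn_app_length by (apply (words_length a); auto).
  destruct (classic (Allowed Z (u ++ v))) as [Hav|Hav].
  - rewrite !ind_T; [lra | eapply allowed_app; eauto | auto].
  - rewrite ind_F by auto. apply ind_nonneg. intro Hu'. apply h_nonneg, rep_spec, Hu'.
Qed.

Lemma separated_sum_le eps j E :
  (/2) ^ j <= eps -> SepSet Z n eps E -> sumR (h n) E <= M * INR (length (words a j)) * cylsum a Z h n.
Proof.
  intros Hj [HnE [HZE HsE]].
  set (g := fun v => ind (Allowed Z v) (h n (rep Z (firstn n v)))).
  assert (HgE : sumR (fun x => h n (rep Z (prefix n x))) E = sumR g (map (prefix (n + j)) E)).
  { rewrite sumR_map. apply sumR_ext_in. intros x Hx. unfold g.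
    rewrite ind_T by (apply allowed_prefix; auto).
    rewrite prefix_app, firstn_app_length by apply prefix_length. reflexivity. }
  assert (Hinc : sumR g (map (prefix (n + j)) E) <= sumR g (words a (n + j))).
  { apply sumR_incl.
    - apply NoDup_map_NoDup_ForallPairs; auto. intros x y Hx Hy Hp.
      destruct (classic (x = y)) as [|Hxy]; auto. exfalso.
      eapply separated_prefix_neq; eauto.
    - intros v Hv. apply in_map_iff in Hv. destruct Hv as [x [<- Hx]].
      eapply subshift_prefix_in_words; eauto.
    - intros b _. unfold g. apply ind_nonneg. intro Hb.
      apply h_nonneg, rep_spec. apply (allowed_app _ _ (skipn n b)). rewrite firstn_skipn; auto. }
  apply Rle_trans with (M * sumR (fun x => h n (rep Z (prefix n x))) E).
  { rewrite <- sumR_scal. apply sumR_le_in. intros x Hx. apply h_bv; auto. }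
  rewrite HgE, Rmult_assoc. apply Rmult_le_compat_l; auto.
  eapply Rle_trans; [exact Hinc | apply extension_sum_le].
Qed.

Lemma Zsum_cylsum_bounds eps j : eps < 1 -> (/2) ^ j <= eps ->
  cylsum a Z h n <= Zsum Z h n eps /\
  Zsum Z h n eps <= M * INR (length (words a j)) * cylsum a Z h n.
Proof.
  intros He Hj.
  destruct (Rsup_lub (fun s => exists E, SepSet Z n eps E /\ s = sumR (h n) E)) as [Hub Hleast].
  - exists (cylsum a Z h n). exists (reps Z (words a n)).
    split; [apply reps_separated; auto | symmetry; apply sumR_reps].
  - exists (M * INR (length (words a j)) * cylsum a Z h n).
    intros s [E [HE ->]]. apply (separated_sum_le eps); auto.
  - unfold Zsum. split.
    + apply Hub. exists (reps Z (words a n)).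
      split; [apply reps_separated; auto | symmetry; apply sumR_reps].
    + apply Hleast. intros s [E [HE ->]]. apply (separated_sum_le eps); auto.
Qed.

End SeparatedSums.

(** Exponential growth rates. *)

Lemma INR_pos n : (1 <= n)%nat -> 0 < INR n.
Proof. intro; apply lt_0_INR; lia. Qed.

Lemma ln_le x y : 0 < x -> x <= y -> ln x <= ln y.
Proof. intros Hx [H|H]; [left; apply ln_increasing; auto | subst; lra]. Qed.

Lemma exp_le x y : x <= y -> exp x <= exp y.
Proof. intros [H|H]; [left; apply exp_increasing; auto | subst; lra]. Qed.

Lemma exp_neg_scale a c : exp (- a) * (c * exp a) = c.
Proof. rewrite Rmult_comm, Rmult_assoc, <- exp_plus, Rplus_opp_r, exp_0. ring. Qed.

Lemma subadditive_multiple (c : nat -> R) :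
  (forall n m, (1 <= n)%nat -> (1 <= m)%nat -> c (n + m)%nat <= c n + c m) ->
  forall n q, (1 <= n)%nat -> c (S q * n)%nat <= INR (S q) * c n.
Proof.
  intros H n q Hn. induction q; [simpl; rewrite Nat.add_0_r; lra|].
  replace (S (S q) * n)%nat with (n + S q * n)%nat by lia. rewrite S_INR.
  assert (c (n + S q * n)%nat <= c n + c (S q * n)%nat) by (apply H; nia). lra.
Qed.

(* Fekete's lemma for quasi-additive sequences: a sequence additive up to
   bounded errors is within bounded distance of a linear function n P. *)
Lemma quasi_additive_linear (a : nat -> R) A B :
  (forall n m, (1 <= n)%nat -> (1 <= m)%nat -> a (n + m)%nat <= a n + a m + A) ->
  (forall n m, (1 <= n)%nat -> (1 <= m)%nat -> a n + a m - B <= a (n + m)%nat) ->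
  exists P, forall n, (1 <= n)%nat -> INR n * P - A <= a n <= INR n * P + B.
Proof.
  intros Hsub Hsup.
  assert (HAB : 0 <= A + B) by (specialize (Hsub 1%nat 1%nat (le_n 1) (le_n 1));
                                specialize (Hsup 1%nat 1%nat (le_n 1) (le_n 1)); lra).
  set (c := fun n => a n + A). set (d := fun n => a n - B).
  assert (Hc : forall n q, (1 <= n)%nat -> c (S q * n)%nat <= INR (S q) * c n).
  { apply subadditive_multiple. intros n m Hn Hm. unfold c. specialize (Hsub n m Hn Hm). lra. }
  assert (Hd : forall n q, (1 <= n)%nat -> INR (S q) * d n <= d (S q * n)%nat).
  { intros n q Hn. enough (- d (S q * n)%nat <= INR (S q) * - d n) by lra.
    apply (subadditive_multiple (fun n => - d n)); auto.
    intros n' m Hn' Hm. unfold d. specialize (Hsup n' m Hn' Hm). lra. }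
  assert (Hdc : forall n m, (1 <= n)%nat -> (1 <= m)%nat -> d n / INR n <= c m / INR m).
  { intros n m Hn Hm. pose proof (INR_pos n Hn). pose proof (INR_pos m Hm).
    assert (Hcross : INR m * d n <= INR n * c m).
    { destruct n as [|n]; [lia|]. destruct m as [|m]; [lia|].
      specialize (Hd (S n) m Hn). specialize (Hc (S m) n Hm).
      replace (S n * S m)%nat with (S m * S n)%nat in Hc by lia.
      assert (d (S m * S n)%nat <= c (S m * S n)%nat) by (unfold c, d; lra). lra. }
    unfold Rdiv. apply Rmult_le_reg_r with (INR n * INR m); [nra|].
    replace (d n * / INR n * (INR n * INR m)) with (INR m * d n) by (field; lra).
    replace (c m * / INR m * (INR n * INR m)) with (INR n * c m) by (field; lra). lra. }
  destruct (completeness (fun r => exists n, (1 <= n)%nat /\ r = d n / INR n)) as [P [HP1 HP2]].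
  - exists (c 1%nat / INR 1). intros r [n [Hn ->]]. apply Hdc; auto.
  - exists (d 1%nat / INR 1). exists 1%nat; auto.
  - exists P. intros n Hn. pose proof (INR_pos n Hn).
    assert (H1 : d n / INR n <= P) by (apply HP1; eauto).
    assert (H2 : P <= c n / INR n) by (apply HP2; intros r [m [Hm ->]]; apply Hdc; auto).
    apply Rmult_le_compat_l with (r := INR n) in H1, H2; try lra.
    replace (INR n * (d n / INR n)) with (d n) in H1 by (field; lra).
    replace (INR n * (c n / INR n)) with (c n) in H2 by (field; lra).
    unfold c, d in *. lra.
Qed.

Lemma limsup_of_bounds (u : nat -> R) P al be : 0 < al -> 0 < be ->
  (forall n, (1 <= n)%nat -> al * exp (INR n * P) <= u n <= be * exp (INR n * P)) ->
  IsLimsup (fun n => ln (u n) / INR n) P.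
Proof.
  intros Hal Hbe H.
  set (K := Rabs (ln al) + Rabs (ln be)).
  assert (HK : 0 <= K) by (unfold K; pose proof (Rabs_pos (ln al)); pose proof (Rabs_pos (ln be)); lra).
  assert (Hb : forall n, (1 <= n)%nat -> Rabs (ln (u n) / INR n - P) <= K / INR n).
  { intros n Hn. specialize (H n Hn). pose proof (INR_pos n Hn).
    assert (He : 0 < exp (INR n * P)) by apply exp_pos.
    assert (L1 : ln al + INR n * P <= ln (u n)).
    { rewrite <- (ln_exp (INR n * P)), <- ln_mult by auto. apply ln_le; nra. }
    assert (L2 : ln (u n) <= ln be + INR n * P).
    { rewrite <- (ln_exp (INR n * P)), <- ln_mult by auto. apply ln_le; nra. }
    replace (ln (u n) / INR n - P) with ((ln (u n) - INR n * P) / INR n) by (field; lra).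
    unfold Rdiv. rewrite Rabs_mult, (Rabs_right (/ INR n)) by (left; apply Rinv_0_lt_compat; auto).
    apply Rmult_le_compat_r; [left; apply Rinv_0_lt_compat; auto|].
    unfold K. apply Rabs_le. pose proof (Rabs_pos (ln al)). pose proof (Rabs_pos (ln be)).
    pose proof (RRle_abs (- ln al)). rewrite Rabs_Ropp in *. pose proof (RRle_abs (ln be)). lra. }
  intros dd Hdd.
  destruct (INR_archimed dd K) as [N HN]; [lra|].
  assert (Hfin : forall n, (Nat.max N 1 <= n)%nat -> Rabs (ln (u n) / INR n - P) < dd).
  { intros n Hn. assert (Hn1 : (1 <= n)%nat) by lia. eapply Rle_lt_trans; [apply Hb; auto|].
    pose proof (INR_pos n Hn1). assert (INR N <= INR n) by (apply le_INR; lia).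
    apply Rmult_lt_reg_r with (INR n); auto. unfold Rdiv. rewrite Rmult_assoc, Rinv_l by lra. nra. }
  split.
  - intros N0. exists (Nat.max N0 (Nat.max N 1)). split; [lia|].
    specialize (Hfin (Nat.max N0 (Nat.max N 1)) ltac:(lia)). apply Rabs_def2 in Hfin. lra.
  - exists (Nat.max N 1). intros n Hn. specialize (Hfin n Hn). apply Rabs_def2 in Hfin. lra.
Qed.

Lemma pressure_of_cylsum_bounds a Z h M P lo hi :
  Subshift a Z -> 0 < M -> 0 < lo -> 0 < hi ->
  (forall n, (1 <= n)%nat -> forall x, Z x -> 0 <= h n x /\ h n x <= M * h n (rep Z (prefix n x))) ->
  (forall n, (1 <= n)%nat -> lo * exp (INR n * P) <= cylsum a Z h n <= hi * exp (INR n * P)) ->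
  Pressure Z h P.
Proof.
  intros HS HM Hlo Hhi Hh Hcyl d Hd. exists 1. split; [lra|]. intros eps Heps.
  destruct (small_pow eps) as [j Hj]; [lra|].
  pose proof (words_count_pos a Z j HS) as Hw.
  exists P. split; [|rewrite Rminus_diag, Rabs_R0; lra].
  apply (limsup_of_bounds _ P lo (M * INR (length (words a j)) * hi)); auto.
  { apply Rmult_lt_0_compat; [apply Rmult_lt_0_compat|]; lra. }
  intros n Hn. specialize (Hcyl n Hn).
  destruct (Zsum_cylsum_bounds a Z h M n HS ltac:(lra) (fun x Hx => proj1 (Hh n Hn x Hx))
              (fun x Hx => proj2 (Hh n Hn x Hx)) eps j) as [B1 B2]; try lra.
  split; [lra|]. eapply Rle_trans; [exact B2|]. rewrite !(Rmult_assoc M).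
  apply Rmult_le_compat_l; [lra|]. rewrite Rmult_assoc. apply Rmult_le_compat_l; lra.
Qed.

(** The cylinder sums of an almost additive potential on a subshift. *)

Section PartitionSum.
Variables (k : nat) (X : pt -> Prop) (f : nat -> pt -> R) (M C : R).
Hypothesis HS : Subshift k X.
Hypothesis HP : Potential X f.
Hypothesis f_aa : forall x, X x -> forall n m, (1 <= n)%nat -> (1 <= m)%nat ->
  exp (- C) * f n x * f m (shiftn n x) <= f (n + m)%nat x /\
  f (n + m)%nat x <= exp C * f n x * f m (shiftn n x).
Hypothesis f_bv : forall n, (1 <= n)%nat -> forall x x', X x -> X x' ->
  prefix n x = prefix n x' -> f n x <= M * f n x'.

Lemma f_pos n x : X x -> 0 < f n x.
Proof. intro Hx. apply (HP n x Hx). Qed.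

Lemma bv_const_ge1 : 1 <= M.
Proof.
  destruct (proj1 HS) as [x Hx]. specialize (f_bv 1%nat (le_n 1) x x Hx Hx eq_refl).
  pose proof (f_pos 1%nat x Hx). nra.
Qed.

Lemma cylsum_term_nonneg n u : 0 <= ind (Allowed X u) (f n (rep X u)).
Proof. apply ind_nonneg. intro Ha. left. apply f_pos, rep_spec, Ha. Qed.

Lemma cylsum_pos n : 0 < cylsum k X f n.
Proof.
  destruct (proj1 HS) as [x0 Hx0]. unfold cylsum.
  eapply Rlt_le_trans; [|apply (sumR_ge_term _ _ (prefix n x0))].
  - cbv beta. rewrite ind_T by (apply allowed_prefix; auto).
    apply f_pos, rep_spec, allowed_prefix; auto.
  - intros; apply cylsum_term_nonneg.
  - eapply subshift_prefix_in_words; eauto.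
Qed.

Lemma f_rep_compare n u x : (1 <= n)%nat -> X x -> prefix n x = u ->
  f n x <= M * f n (rep X u) /\ f n (rep X u) <= M * f n x.
Proof.
  intros Hn Hx Hu. subst u. destruct (rep_prefix X n x Hx) as [Hr Hp].
  split; apply f_bv; auto.
Qed.

Lemma f_rep_concat_upper n m u1 u2 : (1 <= n)%nat -> (1 <= m)%nat ->
  length u1 = n -> length u2 = m -> Allowed X (u1 ++ u2) ->
  f (n + m)%nat (rep X (u1 ++ u2)) <= exp C * M * M * f n (rep X u1) * f m (rep X u2).
Proof.
  intros Hn Hm Hl1 Hl2 Ha. destruct (rep_concat k X n m u1 u2 HS Hl1 Hl2 Ha) as [Hx [Hp1 [Hp2 Hx']]].
  set (x := rep X (u1 ++ u2)) in *.
  destruct (f_rep_compare n u1 x Hn Hx Hp1) as [B1 _].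
  destruct (f_rep_compare m u2 (shiftn n x) Hm Hx' Hp2) as [B2 _].
  pose proof (f_pos n x Hx). pose proof (f_pos m (shiftn n x) Hx'). pose proof (exp_pos C).
  eapply Rle_trans; [apply (f_aa x Hx n m Hn Hm)|].
  replace (exp C * M * M * f n (rep X u1) * f m (rep X u2))
    with (exp C * ((M * f n (rep X u1)) * (M * f m (rep X u2)))) by ring.
  rewrite Rmult_assoc. apply Rmult_le_compat_l; [lra|]. apply Rmult_le_compat; lra.
Qed.

Lemma cylsum_submult n m : (1 <= n)%nat -> (1 <= m)%nat ->
  cylsum k X f (n + m) <= exp C * M * M * cylsum k X f n * cylsum k X f m.
Proof.
  intros Hn Hm. unfold cylsum. rewrite sumR_words_split, sumR_mul_sums.
  apply sumR_le_in; intros u1 Hu1. apply sumR_le_in; intros u2 Hu2.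
  pose proof bv_const_ge1. pose proof (exp_pos C).
  pose proof (cylsum_term_nonneg n u1). pose proof (cylsum_term_nonneg m u2).
  destruct (classic (Allowed X (u1 ++ u2))) as [Ha|Ha].
  - assert (A1 : Allowed X u1) by (eapply allowed_app; eauto).
    assert (A2 : Allowed X u2) by (eapply allowed_infix; eauto).
    rewrite !ind_T by auto.
    apply f_rep_concat_upper; auto; eapply words_length; eauto.
  - rewrite ind_F by auto. apply Rmult_le_pos; auto. apply Rmult_le_pos; auto.
    apply Rmult_le_pos; [apply Rmult_le_pos|]; lra.
Qed.

(* f_q is bounded away from 0 on X (finitely many q-cylinders, bounded variation). *)
Lemma f_lower_bound q : (1 <= q)%nat -> exists d, 0 < d /\ forall y, X y -> d <= f q y.
Proof.
  intro Hq. pose proof bv_const_ge1.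
  assert (Hmin : exists d, 0 < d /\ forall u, In u (words k q) -> Allowed X u -> d <= f q (rep X u)).
  { induction (words k q) as [|u L [d [Hd HdL]]]; [exists 1; split; [lra | intros u []]|].
    destruct (classic (Allowed X u)) as [Ha|Ha].
    - pose proof (f_pos q (rep X u) (proj1 (rep_spec X u Ha))).
      exists (Rmin d (f q (rep X u))). split; [apply Rmin_pos; auto|].
      intros v [<-|Hv] Hav; [apply Rmin_r|]. eapply Rle_trans; [apply Rmin_l | auto].
    - exists d. split; auto. intros v [<-|Hv] Hav; [tauto | auto]. }
  destruct Hmin as [d [Hd Hdu]]. exists (d / M). split; [apply Rdiv_lt_0_compat; lra|].
  intros y Hy. destruct (f_rep_compare q (prefix q y) y Hq Hy eq_refl) as [_ B].
  assert (d <= f q (rep X (prefix q y))).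
  { apply Hdu; [eapply subshift_prefix_in_words; eauto | apply allowed_prefix; auto]. }
  apply Rmult_le_reg_r with M; [lra|]. unfold Rdiv. rewrite Rmult_assoc, Rinv_l by lra. lra.
Qed.

Lemma f_rep_glue_lower n p m u1 w u2 d : (1 <= n)%nat -> (1 <= p)%nat -> (1 <= m)%nat ->
  length u1 = n -> length w = p -> length u2 = m -> Allowed X (u1 ++ w ++ u2) ->
  0 < d -> (forall y, X y -> d <= f p y) ->
  exp (- C) * exp (- C) * d / (M * M) * f n (rep X u1) * f m (rep X u2)
  <= f (n + (p + m))%nat (rep X (u1 ++ w ++ u2)).
Proof.
  intros Hn Hp Hm Hl1 Hlw Hl2 Ha Hd Hfd. pose proof bv_const_ge1.
  destruct (rep_concat k X n (p + m) u1 (w ++ u2) HS Hl1) as [Hx [Hp1 [Hp2 Hx']]]; auto.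
  { rewrite length_app; lia. }
  set (x := rep X (u1 ++ w ++ u2)) in *.
  rewrite prefix_app in Hp2. apply app_inv_len in Hp2; [|rewrite prefix_length; auto].
  destruct Hp2 as [_ Hpu2]. rewrite shiftn_add in Hpu2.
  assert (Hx'' : X (shiftn (n + p) x)) by (eapply subshift_shiftn; eauto).
  destruct (f_rep_compare n u1 x Hn Hx Hp1) as [_ B1].
  destruct (f_rep_compare m u2 (shiftn (n + p) x) Hm Hx'' Hpu2) as [_ B2].
  assert (E1 := proj1 (f_aa x Hx n (p + m)%nat Hn ltac:(lia))).
  assert (E2 := proj1 (f_aa (shiftn n x) Hx' p m Hp Hm)). rewrite shiftn_add in E2.
  assert (B3 := Hfd _ Hx').
  pose proof (f_pos n x Hx). pose proof (f_pos m (shiftn (n + p) x) Hx'').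
  pose proof (f_pos n (rep X u1) (proj1 (rep_spec X u1 (allowed_app _ _ _ Ha)))).
  assert (0 < f m (rep X u2)) by (apply f_pos; rewrite <- Hpu2; apply rep_prefix; auto).
  assert (0 < exp (- C)) by apply exp_pos.
  set (e := exp (- C)) in *.
  assert (Q1 : f n (rep X u1) * f m (rep X u2) <= (M * M) * (f n x * f m (shiftn (n + p) x))).
  { replace ((M * M) * (f n x * f m (shiftn (n + p) x)))
      with ((M * f n x) * (M * f m (shiftn (n + p) x))) by ring.
    apply Rmult_le_compat; lra. }
  assert (Q2 : e * e * d * (f n x * f m (shiftn (n + p) x)) <= f (n + (p + m))%nat x).
  { eapply Rle_trans; [|exact E1].
    replace (e * e * d * (f n x * f m (shiftn (n + p) x)))
      with (e * f n x * (e * d * f m (shiftn (n + p) x))) by ring.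
    apply Rmult_le_compat_l; [nra|]. eapply Rle_trans; [|exact E2].
    apply Rmult_le_compat_r; [lra|]. apply Rmult_le_compat_l; lra. }
  eapply Rle_trans; [|exact Q2]. unfold Rdiv.
  replace (e * e * d * / (M * M) * f n (rep X u1) * f m (rep X u2))
    with (e * e * d * (/ (M * M) * (f n (rep X u1) * f m (rep X u2)))) by ring.
  apply Rmult_le_compat_l; [nra|].
  apply Rmult_le_reg_l with (M * M); [nra|]. rewrite <- Rmult_assoc, Rinv_r, Rmult_1_l by nra. lra.
Qed.

Lemma cylsum_supermult p : (1 <= p)%nat ->
  (forall u v, Allowed X u -> Allowed X v -> exists w, length w = p /\ Allowed X (u ++ w ++ v)) ->
  exists c0, 0 < c0 /\ forall n m, (1 <= n)%nat -> (1 <= m)%nat ->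
    c0 * cylsum k X f n * cylsum k X f m <= cylsum k X f (n + (p + m)).
Proof.
  intros Hp Hspec. pose proof bv_const_ge1.
  destruct (f_lower_bound p Hp) as [d [Hd Hfd]].
  assert (0 < exp (- C)) by apply exp_pos.
  exists (exp (- C) * exp (- C) * d / (M * M)). split.
  { apply Rdiv_lt_0_compat; [|nra]. repeat apply Rmult_lt_0_compat; auto. }
  intros n m Hn Hm. unfold cylsum. rewrite sumR_mul_sums, sumR_words_split.
  apply sumR_le_in; intros u1 Hu1. rewrite sumR_words_split, sumR_swap.
  apply sumR_le_in; intros u2 Hu2.
  destruct (classic (Allowed X u1 /\ Allowed X u2)) as [[A1 A2]|Hna].
  - destruct (Hspec u1 u2 A1 A2) as [w [Hw Ha]].
    assert (Hwin : In w (words k p)).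
    { rewrite <- Hw. apply (allowed_in_words k X w HS), (allowed_app _ _ u2), (allowed_infix k X u1); auto. }
    eapply Rle_trans; [|apply (sumR_ge_term _ _ w)]; auto.
    + cbv beta. rewrite !ind_T by auto.
      apply f_rep_glue_lower; auto; eapply words_length; eauto.
    + intros; apply cylsum_term_nonneg.
  - assert (Hz : exp (- C) * exp (- C) * d / (M * M) * ind (Allowed X u1) (f n (rep X u1))
                 * ind (Allowed X u2) (f m (rep X u2)) = 0).
    { destruct (classic (Allowed X u1)).
      - rewrite (ind_F (Allowed X u2)) by tauto. ring.
      - rewrite (ind_F (Allowed X u1)) by tauto. ring. }
    rewrite Hz. apply sumR_nonneg. intros; apply cylsum_term_nonneg.
Qed.

(* With specification, the cylinder sums grow exactly exponentially:
   cylsum n is within constant factors of e^{nP} (Fekete on log cylsum). *)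
Lemma cylsum_exponential : Specification X ->
  exists P lo hi, 0 < lo /\ 0 < hi /\ forall n, (1 <= n)%nat ->
    lo * exp (INR n * P) <= cylsum k X f n <= hi * exp (INR n * P).
Proof.
  intros [p [Hp Hspec]]. pose proof bv_const_ge1.
  destruct (cylsum_supermult p Hp Hspec) as [c0 [Hc0 Hsup]].
  set (Zn := cylsum k X f) in *.
  assert (HZ : forall n, 0 < Zn n) by apply cylsum_pos.
  set (U := exp C * M * M).
  assert (HU : 0 < U) by (pose proof (exp_pos C); unfold U; apply Rmult_lt_0_compat; nra).
  set (D := U * Zn p / c0).
  assert (HD : 0 < D) by (unfold D; apply Rdiv_lt_0_compat; auto; apply Rmult_lt_0_compat; auto).
  (* removing the gap of length p costs only the constant factor U * Zn p *)
  assert (Hlow : forall n m, (1 <= n)%nat -> (1 <= m)%nat -> Zn n * Zn m <= D * Zn (n + m)%nat).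
  { intros n m Hn Hm. specialize (Hsup n m Hn Hm).
    replace (n + (p + m))%nat with ((n + m) + p)%nat in Hsup by lia.
    assert (H2 := cylsum_submult (n + m)%nat p ltac:(lia) Hp). fold Zn U in H2.
    apply Rmult_le_reg_l with c0; auto. unfold D.
    replace (c0 * (U * Zn p / c0 * Zn (n + m)%nat)) with (U * Zn (n + m)%nat * Zn p) by (field; lra).
    lra. }
  destruct (quasi_additive_linear (fun n => ln (Zn n)) (ln U) (ln D)) as [P HPb].
  - intros n m Hn Hm. assert (Hs := cylsum_submult n m Hn Hm). fold Zn U in Hs.
    assert (0 < Zn n * Zn m) by (apply Rmult_lt_0_compat; auto).
    rewrite <- (ln_mult (Zn n) (Zn m)), <- (ln_mult (Zn n * Zn m) U) by auto.
    apply ln_le; [auto | lra].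
  - intros n m Hn Hm. enough (ln (Zn n * Zn m) <= ln (D * Zn (n + m)%nat)) by
      (rewrite !ln_mult in * by auto; lra).
    apply ln_le; [apply Rmult_lt_0_compat; auto | apply Hlow; auto].
  - exists P, (/ U), D. split; [apply Rinv_0_lt_compat; auto|]. split; auto.
    intros n Hn. destruct (HPb n Hn) as [B1 B2].
    rewrite <- (exp_ln (Zn n)) by auto.
    rewrite <- (exp_ln U) at 1 by auto. rewrite <- (exp_ln D) at 1 by auto.
    rewrite <- exp_Ropp, <- !exp_plus. split; apply exp_le; lra.
Qed.

End PartitionSum.

(** Fibre sums of the factor map and the normalised sums S_n. *)

Definition fibre_sum (k : nat) (X : pt -> Prop) (Phi : nat -> nat) (f : nat -> pt -> R)
  (n : nat) (w : list nat) : R :=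
  sumR (fun u => ind (Wset X Phi n w u) (f n (rep X u))) (words k n).

Lemma gtilde_prefix k X Y Phi f P n y : Y y ->
  gtilde k X Phi f P n y = gtilde k X Phi f P n (rep Y (prefix n y)).
Proof. intro Hy. unfold gtilde. rewrite (proj2 (rep_prefix Y n y Hy)). reflexivity. Qed.

Lemma Ssum_cylsum k l X Y Phi f P n :
  Ssum k l X Y Phi f P n = cylsum l Y (gtilde k X Phi f P) n.
Proof.
  unfold Ssum, cylsum, gtilde. apply sumR_ext_in. intros w Hw.
  destruct (classic (Allowed Y w)) as [Ha|Ha]; [|rewrite !ind_F; auto].
  destruct (rep_spec Y w Ha) as [_ Hp]. rewrite (words_length _ _ _ Hw) in Hp. rewrite Hp. reflexivity.
Qed.

Section Fibres.
Variables (k l : nat) (X Y : pt -> Prop) (Phi : nat -> nat) (f : nat -> pt -> R) (M : R).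
Hypothesis HSY : Subshift l Y.
Hypothesis Hpi : OneBlockFactor X Y Phi.
Hypothesis HP : Potential X f.
Hypothesis f_bv : forall n, (1 <= n)%nat -> forall x x', X x -> X x' ->
  prefix n x = prefix n x' -> f n x <= M * f n x'.

Lemma fibre_sum_nonneg n w : 0 <= fibre_sum k X Phi f n w.
Proof.
  apply sumR_nonneg. intros u _. apply ind_nonneg. intros [Ha _]. left.
  apply (f_pos X f); auto. apply rep_spec; auto.
Qed.

(* g_n(w) lies between the fibre sum and M times it: by bounded variation any
   choice of points in the cylinders is comparable to the chosen points. *)
Lemma gword_bounds n w : (1 <= n)%nat ->
  fibre_sum k X Phi f n w <= gword k X Phi f n w <= M * fibre_sum k X Phi f n w.
Proof.
  intros Hn.
  set (S := fun s => exists c : list nat -> pt,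
    (forall u, Wset X Phi n w u -> X (c u) /\ prefix n (c u) = u) /\
    s = sumR (fun u => ind (Wset X Phi n w u) (f n (c u))) (words k n)).
  assert (Hin : S (fibre_sum k X Phi f n w)).
  { exists (rep X). split; auto. intros u [Ha [Hl _]]. rewrite <- Hl. apply rep_spec; auto. }
  assert (Hb : forall s, S s -> s <= M * fibre_sum k X Phi f n w).
  { intros s [c [Hc ->]]. unfold fibre_sum. rewrite <- sumR_scal. apply sumR_le_in. intros u _.
    destruct (classic (Wset X Phi n w u)) as [Hw|Hw]; [|rewrite !ind_F by auto; lra].
    rewrite !ind_T by auto. destruct (Hc u Hw) as [Hcx Hcp]. destruct Hw as [Ha [Hl _]].
    destruct (rep_spec X u Ha) as [Hr Hrp]. rewrite Hl in Hrp. apply f_bv; auto. congruence. }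
  destruct (Rsup_lub S) as [Hub Hleast]; [eauto | eauto |].
  unfold gword. fold S. split; [apply Hub | apply Hleast]; auto.
Qed.

(* Grouping the n-cylinders of X by their image word under pi: the fibre sums
   over the allowed words of Y add up to the cylinder sum of X. *)
Lemma fibre_decomposition n :
  sumR (fun w => ind (Allowed Y w) (fibre_sum k X Phi f n w)) (words l n) = cylsum k X f n.
Proof.
  destruct Hpi as [HXY _]. unfold fibre_sum, cylsum.
  rewrite (sumR_ext_in _ (fun w => sumR (fun u => ind (Allowed Y w /\ Wset X Phi n w u)
                                                  (f n (rep X u))) (words k n))).
  2: { intros w _. destruct (classic (Allowed Y w)) as [Hy|Hy].
       - rewrite ind_T by auto. apply sumR_ext_in. intros u _. unfold ind.
         repeat destruct excluded_middle_informative; tauto.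
       - rewrite ind_F, (sumR_ext_in _ (fun _ => 0)), sumR_const by
           (auto; intros u _; apply ind_F; tauto). lra. }
  rewrite sumR_swap. apply sumR_ext_in. intros u Hu. pose proof (words_length _ _ _ Hu) as Hlu.
  (* the only word of Y whose fibre contains [u] is its image map Phi u *)
  rewrite (sumR_ind_unique _ _ (map Phi u)); [| apply NoDup_words | |].
  - destruct (classic (Allowed X u)) as [Ha|Ha]; [|rewrite !ind_F; auto; intros [_ [Hw _]]; tauto].
    rewrite (ind_T (Allowed X u)) by auto. apply ind_T.
    destruct Ha as [x0 [Hx0 Hp0]]. rewrite Hlu in Hp0. split.
    + exists (blockmap Phi x0). split; auto. rewrite length_map, Hlu, prefix_blockmap, Hp0; auto.
    + split; [exists x0; rewrite Hlu; auto | split; auto].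
      intros x Hx Hpx. rewrite prefix_blockmap, Hpx; auto.
  - intros w [_ [[x0 [Hx0 Hp0]] [Hl Hw]]]. rewrite Hl in Hp0.
    rewrite <- (Hw x0 Hx0 Hp0), prefix_blockmap, Hp0; auto.
  - intros [Hy _]. rewrite <- Hlu, <- (length_map Phi u). apply (allowed_in_words l Y); auto.
Qed.

Lemma Ssum_bounds P n : (1 <= n)%nat ->
  exp (- (INR n * P)) * cylsum k X f n <= Ssum k l X Y Phi f P n
  <= M * (exp (- (INR n * P)) * cylsum k X f n).
Proof.
  intros Hn. rewrite <- fibre_decomposition. unfold Ssum. rewrite <- !sumR_scal.
  pose proof (exp_pos (- (INR n * P))).
  split; apply sumR_le_in; intros w _; unfold ind; destruct excluded_middle_informative; try lra;
    destruct (gword_bounds n w Hn); pose proof (fibre_sum_nonneg n w); nra.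
Qed.

Lemma Ssum_bounded P lo hi : 0 <= M ->
  (forall n, (1 <= n)%nat -> lo * exp (INR n * P) <= cylsum k X f n <= hi * exp (INR n * P)) ->
  forall n, (1 <= n)%nat -> lo <= Ssum k l X Y Phi f P n <= M * hi.
Proof.
  intros HM0 Hcyl n Hn. destruct (Ssum_bounds P n Hn) as [B1 B2].
  destruct (Hcyl n Hn) as [C1 C2]. pose proof (exp_pos (- (INR n * P))).
  rewrite <- (exp_neg_scale (INR n * P) lo), <- (exp_neg_scale (INR n * P) hi).
  split; [|eapply Rle_trans; [exact B2|]; apply Rmult_le_compat_l]; nra.
Qed.

Lemma gtilde_nonneg P n y : (1 <= n)%nat -> 0 <= gtilde k X Phi f P n y.
Proof.
  intro Hn. unfold gtilde. destruct (gword_bounds n (prefix n y) Hn).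
  pose proof (fibre_sum_nonneg n (prefix n y)). pose proof (exp_pos (- (INR n * P))). nra.
Qed.

End Fibres.

Theorem lemma3p8 (k l : nat) (X Y : pt -> Prop) (Phi : nat -> nat)
  (f : nat -> pt -> R) :
  Subshift k X -> Subshift l Y -> OneBlockFactor X Y Phi ->
  Specification X ->
  Potential X f -> AlmostAdditive X f -> BoundedVariation X f ->
  exists PX, Pressure X f PX /\
  exists PY, Pressure Y (gtilde k X Phi f PX) PY /\
  exists K1 K2, 0 < K1 /\ 0 < K2 /\
    forall n, (1 <= n)%nat ->
      K1 <= exp (INR n * PY) / Ssum k l X Y Phi f PX n <= K2.
Proof.
  intros HSX HSY Hpi Hspec HP [C [_ HAA]] [M HM].
  pose proof (bv_const_ge1 k X f M HSX HP HM) as HM1.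
  destruct (cylsum_exponential k X f M C HSX HP HAA HM Hspec) as [P [lo [hi [Hlo [Hhi Hcyl]]]]].
  pose proof (Ssum_bounded k l X Y Phi f M HSY Hpi HP HM P lo hi ltac:(lra) Hcyl) as HSn.
  exists P. split.
  { apply (pressure_of_cylsum_bounds k X f M P lo hi); auto; [lra|].
    intros n Hn x Hx. split; [left; apply (f_pos X f); auto|].
    apply (f_rep_compare X f M HM n _ x Hn Hx eq_refl). }
  exists 0. split.
  { apply (pressure_of_cylsum_bounds l Y (gtilde k X Phi f P) 1 0 lo (M * hi)); auto; try nra.
    - intros n Hn y Hy. rewrite <- gtilde_prefix by auto.
      split; [apply (gtilde_nonneg k X Phi f M); auto | lra].
    - intros n Hn. rewrite <- Ssum_cylsum, Rmult_0_r, exp_0, !Rmult_1_r. auto. }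
  exists (/ (M * hi)), (/ lo). split; [apply Rinv_0_lt_compat; nra|].
  split; [apply Rinv_0_lt_compat; lra|].
  intros n Hn. destruct (HSn n Hn). rewrite Rmult_0_r, exp_0. unfold Rdiv. rewrite Rmult_1_l.
  split; apply Rinv_le_contravar; lra.
Qed.
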